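(* Every first countable topological space which is statistically compact is sequentially compact.
   Context: For $A\subseteq\mathbb{N}$ let $d_n(A)=|A\cap\{1,\dots,n\}|/n$, $\overline{d}(A)=\limsup_n d_n(A)$, $\underline{d}(A)=\liminf_n d_n(A)$, and $d(A)$ their common value when equal. A sequence in $X$ is a map from an infinite subset $M\subseteq\mathbb{N}$ into $X$, written $(x_n)_{n\in M}$; a subsequence is $(x_n)_{n\in N}$ with $N\subseteq M$ infinite. It is nonthin if $\overline{d}(M)>0$. A nonthin sequence $(x_n)_{n\in M}$ is statistically convergent to $a\in X$ if for every open $U\ni a$, $d(\{n\in M:x_n\notin U\})=0$. A topological space $X$ is statistically compact if every nonthin sequence in $X$ has a nonthin subsequence that is statistically convergent to some point of $X$. *)

From HB Require Import structures.
From mathcomp Require Import all_boot all_order all_algebra.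
From mathcomp Require Import all_classical all_reals all_analysis.
From mathcomp Require Import Rstruct Rstruct_topology.
Set Implicit Arguments. Unset Strict Implicit. Unset Printing Implicit Defensive.
Import Order.TTheory GRing.Theory Num.Theory.
Local Open Scope classical_set_scope.
Local Open Scope ring_scope.

(* The natural numbers are {1,2,...}; subsets of nat are only inspected on i >= 1. *)

Definition dens_n (A : set nat) (n : nat) : Rdefinitions.R :=
  (\sum_(1 <= i < n.+1) ((i \in A) : nat))%N%:R / n%:R.

Definition upper_density (A : set nat) : \bar Rdefinitions.R :=
  limn_esup (fun n => (dens_n A n)%:E).
Definition lower_density (A : set nat) : \bar Rdefinitions.R :=
  limn_einf (fun n => (dens_n A n)%:E).

Definition has_density (A : set nat) (a : Rdefinitions.R) : Prop :=
  upper_density A = a%:E /\ lower_density A = a%:E.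

(* A sequence (x_n)_{n in M} is given by its (infinite) index set M and a map x
   (values of x outside M are irrelevant). It is nonthin iff upper density of M > 0
   (which forces M to be infinite). *)
Definition nonthin (M : set nat) : Prop := (0 < upper_density M)%E.

Definition stat_converges {X : topologicalType} (M : set nat) (x : nat -> X) (a : X) : Prop :=
  nonthin M /\
  forall U : set X, open U -> U a -> has_density [set n | M n /\ ~ U (x n)] 0.

Definition statistically_compact (X : topologicalType) : Prop :=
  forall (M : set nat) (x : nat -> X), infinite_set M -> nonthin M ->
    exists (N : set nat) (a : X),
      [/\ N `<=` M, infinite_set N, nonthin N & stat_converges N x a].

Definition first_countable (X : topologicalType) : Prop :=
  forall x : X, exists B : set (set X),
    [/\ countable B, (forall U, B U -> open U /\ U x) &
        (forall V, nbhs x V -> exists2 U, B U & U `<=` V)].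

Definition sequentially_compact (X : topologicalType) : Prop :=
  forall x : nat -> X, exists (phi : nat -> nat) (a : X),
    {homo phi : m n / (m < n)%N} /\ (x \o phi) @ \oo --> a.

From mathcomp Require Import all_boot all_order all_algebra.
From mathcomp Require Import all_classical all_reals all_analysis.
From mathcomp Require Import zify.
From mathcomp Require Import Rstruct Rstruct_topology.
Set Implicit Arguments. Unset Strict Implicit. Unset Printing Implicit Defensive.
Import Order.TTheory GRing.Theory Num.Theory.
Local Open Scope classical_set_scope.
Local Open Scope ring_scope.

(* Given a sequence x, statistical compactness applied to the whole sequence
   (index set nat, which is nonthin) yields a nonthin index set N and a point
   a such that (x_n)_{n in N} converges statistically to a.  The proof has
   three independent parts:
   1. Density: a nonthin set cannot be eventually contained in a set of
      density zero (counting comparison + squeeze).  Hence a statistical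
      limit a is a cluster point of x: every neighbourhood of a contains x_n
      for infinitely many n.
   2. First countability: a point has a decreasing countable neighbourhood
      base (W k), obtained by intersecting the first k members of a countable
      base.
   3. Choosing recursively n_0 < n_1 < ... with x_(n_k) in W k gives a
      subsequence converging to a. *)

Definition count_upto (A : set nat) (n : nat) : nat :=
  \sum_(1 <= i < n.+1) ((i \in A) : nat).

Lemma dens_nE (A : set nat) (n : nat) : dens_n A n = (count_upto A n)%:R / n%:R.
Proof. by []. Qed.

Lemma dens_n_ge0 (A : set nat) (n : nat) : 0 <= dens_n A n.
Proof. by rewrite /dens_n divr_ge0. Qed.

Lemma count_upto_le (A : set nat) (n : nat) : (count_upto A n <= n)%N.
Proof.
apply: leq_trans (_ : \sum_(1 <= i < n.+1) 1 <= _)%N.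
  by apply: leq_sum => i _; case: (i \in A).
by rewrite sum_nat_const_nat muln1 subn1.
Qed.

Lemma count_upto_shift (N T : set nat) (m n : nat) :
  (forall i, (m < i)%N -> N i -> T i) ->
  (count_upto N n <= count_upto T n + m)%N.
Proof.
move=> NT; elim: n => [|n IH]; first by rewrite /count_upto !big_geq.
rewrite /count_upto !(big_nat_recr n.+1) //= -!/(count_upto _ n).
case: (leqP n.+1 m) => [le_nm|lt_mn].
  have := count_upto_le N n.
  by case: (n.+1 \in N); case: (n.+1 \in T) => /=; lia.
case hN: (n.+1 \in N) => /=; last by lia.
have -> : n.+1 \in T by apply/mem_set/NT => //; exact/set_mem.
by rewrite /=; lia.
Qed.

Lemma density0_cvg (T : set nat) :
  has_density T 0 -> (fun n => (dens_n T n)%:E) @ \oo --> 0%E.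
Proof.
move=> [upT _]; apply: limn_esup_le_cvg; first by rewrite -/(upper_density T) upT.
by move=> n; rewrite lee_fin dens_n_ge0.
Qed.

Lemma cst_div_cvg0 (m : nat) :
  (fun n => ((m%:R / n%:R : Rdefinitions.R))%:E) @ \oo --> 0%E.
Proof.
have m_harmonic : (fun n => m%:R * harmonic n) @ \oo --> (0 : Rdefinitions.R).
  have := cvgM (cvg_cst (m%:R : Rdefinitions.R)) (@cvg_harmonic Rdefinitions.R).
  by rewrite mulr0; apply.
apply: cvg_EFin; first exact: nearW.
by rewrite -cvg_shiftS.
Qed.

Lemma nonthin_not_eventually_in_density0 (N T : set nat) (m : nat) :
  nonthin N -> has_density T 0 -> ~ (forall i, (m < i)%N -> N i -> T i).
Proof.
move=> ntN dT NT.
have dN0 : (fun n => (dens_n N n)%:E) @ \oo --> 0%E.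
  apply: (@squeeze_cvge _ _ _ _ (cst 0%E) _
            (fun n => (dens_n T n)%:E + (m%:R / n%:R)%:E)%E).
  - apply: nearW => n; rewrite lee_fin dens_n_ge0 /= -EFinD lee_fin.
    rewrite !dens_nE -mulrDl ler_wpM2r // -natrD ler_nat.
    exact: count_upto_shift.
  - exact: cvg_cst.
  - by rewrite -[0%E]adde0; apply: cvgeD => //; [exact: density0_cvg | exact: cst_div_cvg0].
move: ntN; rewrite /nonthin /upper_density (cvg_limn_einf_sup dN0).2.
by rewrite ltxx.
Qed.

(* The whole index set nat has density 1, so it is nonthin. *)
Lemma nonthin_setT : nonthin setT.
Proof.
have d1 : (fun n => (dens_n setT n)%:E) @ \oo --> 1%E.
  have e : {near \oo, cst 1%E =1 (fun n => (dens_n setT n)%:E)}.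
    near=> n; rewrite dens_nE /count_upto.
    under eq_bigr do rewrite in_setT.
    rewrite sum_nat_const_nat muln1 subn1 /= divff // pnatr_eq0 -lt0n.
    by near: n; exists 1%N.
  exact: cvg_trans (near_eq_cvg e) (cvg_cst _).
by rewrite /nonthin /upper_density (cvg_limn_einf_sup d1).2.
Unshelve. all: by end_near. Qed.

Lemma stat_limit_cluster (X : topologicalType) (N : set nat) (x : nat -> X) (a : X) :
  stat_converges N x a ->
  forall V, nbhs a V -> forall m, exists2 n, (m < n)%N & V (x n).
Proof.
move=> [ntN statN] V; rewrite nbhsE => -[U [oU Ua] UV] m.
apply: contrapT => noV.
apply: (nonthin_not_eventually_in_density0 (m := m) ntN (statN U oU Ua)).
move=> i mi Ni; split => // Uxi; apply: noV; exists i => //; exact: UV.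
Qed.

Lemma first_countable_decreasing_base (X : topologicalType) (a : X) :
  (exists B : set (set X),
    [/\ countable B, (forall U, B U -> open U /\ U a) &
        (forall V, nbhs a V -> exists2 U, B U & U `<=` V)]) ->
  exists W : nat -> set X,
    [/\ forall k, nbhs a (W k), {homo W : k n / (k <= n)%N >-> n `<=` k} &
        forall V, nbhs a V -> exists k, W k `<=` V].
Proof.
move=> [B [cB Bopen Bbase]]; have [f finj] := countable_injP _ cB.
pose W k := [set y | forall U, B U -> (f U < k)%N -> U y].
exists W; split.
- elim=> [|k IH]; first by apply: filterS filterT => y _ U _; rewrite ltn0.
  case: (pselect (exists2 U, B U & f U = k)) => [[U0 BU0 fU0]|noU].
    have U0a : nbhs a U0 by have [? ?] := Bopen _ BU0; apply: open_nbhs_nbhs.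
    apply: filterS (filterI IH U0a) => y [Wy U0y] U BU.
    rewrite ltnS leq_eqVlt => /orP[/eqP fUk|]; last exact: Wy.
    suff -> : U = U0 by [].
    by apply: finj; rewrite ?inE // fUk fU0.
  apply: filterS IH => y Wy U BU.
  rewrite ltnS leq_eqVlt => /orP[/eqP fUk|]; last exact: Wy.
  by exfalso; apply: noU; exists U.
- by move=> k n kn y Wy U BU fUk; apply: Wy => //; exact: leq_trans fUk kn.
- move=> V /Bbase[U BU UV]; exists (f U).+1; move=> y Wy.
  exact: UV (Wy U BU (ltnSn _)).
Qed.

Lemma increasing_choice (P : nat -> nat -> Prop) :
  (forall k m, exists2 n, (m < n)%N & P k n) ->
  exists phi : nat -> nat, {homo phi : m n / (m < n)%N} /\ forall k, P k (phi k).
Proof.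
move=> freqP.
have next k m : {n | (m < n)%N /\ P k n}.
  by apply: cid; have [n ? ?] := freqP k m; exists n.
pose phi := fix phi k := if k is k'.+1 then sval (next k (phi k'))
                         else sval (next 0%N 0%N).
exists phi; split.
  apply: homo_ltn; first exact: ltn_trans.
  by move=> k; exact: (svalP (next k.+1 (phi k))).1.
by case=> [|k]; [exact: (svalP (next 0%N 0%N)).2 | exact: (svalP (next k.+1 (phi k))).2].
Qed.

Lemma cluster_subseq (X : topologicalType) (x : nat -> X) (a : X) (W : nat -> set X) :
  {homo W : k n / (k <= n)%N >-> n `<=` k} ->
  (forall V, nbhs a V -> exists k, W k `<=` V) ->
  (forall k m, exists2 n, (m < n)%N & W k (x n)) ->
  exists phi : nat -> nat, {homo phi : m n / (m < n)%N} /\ (x \o phi) @ \oo --> a.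
Proof.
move=> Wdecr Wbase freqW.
have [phi [phi_incr phiW]] := increasing_choice freqW.
exists phi; split => // V /Wbase[k WV].
by exists k => // n /= kn; apply/WV/(Wdecr k n kn)/phiW.
Qed.

Theorem mainTheorem6 (X : topologicalType) :
  first_countable X -> statistically_compact X -> sequentially_compact X.
Proof.
move=> fcX scX x.
have [N [a [_ _ _ statNa]]] := scX setT x infinite_nat nonthin_setT.
have [W [Wnbhs Wdecr Wbase]] := first_countable_decreasing_base (fcX a).
have freqW k m : exists2 n, (m < n)%N & W k (x n).
  exact: stat_limit_cluster statNa _ (Wnbhs k) m.
have [phi [phi_incr xphi_a]] := cluster_subseq Wdecr Wbase freqW.
by exists phi, a.
Qed.
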